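(* Let $h,k\ge 2$, $w=a^hb^k$, and for $n\ge1$ let $S_n = a^h(a^{2h}b^{2k})(aba^{h-1}b^{k-1})^{n}(a^{2h}b^{2k})b^k$. For all integers $i,j\ge1$, $S_i \vdash^*_{\{w\}} S_j$ if and only if $i=j$.
   Context: For words $u,v$, the shuffle $u \sqcup\!\sqcup v$ is the set of all words $u_1v_1\cdots u_kv_k$ with $k\ge 1$, $u=u_1\cdots u_k$, $v=v_1\cdots v_k$ (pieces possibly empty). For a finite set $I$ of words, $v \vdash_I w$ means $w \in v \sqcup\!\sqcup u$ for some $u\in I$, and $\vdash_I^*$ is its reflexive-transitive closure. *)

From HB Require Import structures.
From Stdlib Require Import Relations.
From mathcomp Require Import all_boot.
Set Implicit Arguments. Unset Strict Implicit. Unset Printing Implicit Defensive.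

Inductive letter := la | lb.
Definition letter_eqb (x y : letter) : bool :=
  match x, y with la, la | lb, lb => true | _, _ => false end.
Lemma letter_eqP : Equality.axiom letter_eqb.
Proof. by case; case; constructor. Qed.
HB.instance Definition _ := hasDecEq.Build letter letter_eqP.

Definition word := seq letter.

Definition shuffle (u v x : word) : Prop :=
  exists (us vs : seq word),
    [/\ 1 <= size us, size us = size vs, flatten us = u, flatten vs = v &
        x = flatten [seq p.1 ++ p.2 | p <- zip us vs]].

(* v |-_I w : w in v ⧢ u for some u in I (I a finite set of words, given as a list) *)
Definition step (I : seq word) (v w : word) : Prop :=
  exists2 u, u \in I & shuffle v u w.

Definition derives (I : seq word) : relation word := clos_refl_trans word (step I).

Definition pw (c : letter) (n : nat) : word := nseq n c.

Definition wrd (h k : nat) : word := pw la h ++ pw lb k.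

Definition Sn (h k n : nat) : word :=
  pw la h ++ (pw la (2 * h) ++ pw lb (2 * k)) ++
  flatten (nseq n ([:: la; lb] ++ pw la h.-1 ++ pw lb k.-1)) ++
  (pw la (2 * h) ++ pw lb (2 * k)) ++ pw lb k.

From mathcomp Require Import all_boot zify.
From Stdlib Require Import ZArith Lia Relations.

Set Implicit Arguments. Unset Strict Implicit. Unset Printing Implicit Defensive.

Local Coercion Z.of_nat : nat >-> Z.

(* Follow a derivation from S_i and mark the letters inserted by the copies of
   w = a^h b^k.  With the height  ht s = k |s|_a - h |s|_b,  the marked
   letters always form an admissible word: every prefix has nonnegative height,
   every prefix containing a b contains at least h a's, and the total height is 0.
   The prefix heights of S_n reach their maximum 3hk exactly at the positions 3h
   and 5h + 2k + n(h + k).  Marked letters never lower a prefix height, so the two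
   peaks of S_i are sent to the two peaks of S_j: nothing is inserted before the
   first one or after the second one.  In between, the first inserted b comes
   after at least h inserted a's, which raises either the number of a's (in the
   block b^{2k}) or the height (further right) beyond what S_j allows.  Hence
   nothing was inserted, S_i = S_j and i = j. *)

Section Interleave.
Variable T : Type.
Implicit Types u v t : seq T.

Inductive interleave : seq T -> seq T -> seq T -> Prop :=
| interleave_nil : interleave [::] [::] [::]
| interleave_l x u v t : interleave u v t -> interleave (x :: u) v (x :: t)
| interleave_r x u v t : interleave u v t -> interleave u (x :: v) (x :: t).

Lemma interleave_s0 u : interleave u [::] u.
Proof. by elim: u => [|x u IH]; constructor. Qed.

Lemma interleave_0s v : interleave [::] v v.
Proof. by elim: v => [|x v IH]; constructor. Qed.

Lemma interleave_cat u1 v1 t1 u2 v2 t2 :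
  interleave u1 v1 t1 -> interleave u2 v2 t2 ->
  interleave (u1 ++ u2) (v1 ++ v2) (t1 ++ t2).
Proof. by move=> I1 I2; elim: I1 => //= *; constructor. Qed.

Lemma interleave_take u v t n : interleave u v t ->
  exists n1 n2, interleave (take n1 u) (take n2 v) (take n t).
Proof.
move=> I; elim: I n => [|x u' v' t' _ IH|x u' v' t' _ IH] [|n];
  try by exists 0, 0; rewrite !take0; constructor.
- by have [n1 [n2 I]] := IH n; exists n1.+1, n2; constructor.
- by have [n1 [n2 I]] := IH n; exists n1, n2.+1; constructor.
Qed.

End Interleave.

Lemma interleave_count_mem (T : eqType) (x : T) u v t :
  interleave u v t -> count_mem x t = count_mem x u + count_mem x v.
Proof. by elim=> //= y u' v' t' _ ->; lia. Qed.

Lemma shuffle_interleave (u v t : word) : shuffle u v t -> interleave u v t.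
Proof.
case=> us [vs [_ size_us <- <- ->]].
elim: us vs size_us => [|u0 us IH] [|v0 vs] //=; first by constructor.
case=> size_us; apply: interleave_cat; last exact: IH.
by have := interleave_cat (interleave_s0 u0) (interleave_0s v0); rewrite cats0.
Qed.

Section Marking.
Variable T : Type.
Implicit Types t : seq (T * bool).

Definition unmarked t : seq T := [seq p.1 | p <- t & ~~ p.2].
Definition marked t : seq T := [seq p.1 | p <- t & p.2].

Lemma unmarked_cons x b t :
  unmarked ((x, b) :: t) = if b then unmarked t else x :: unmarked t.
Proof. by case: b. Qed.

Lemma marked_cons x b t :
  marked ((x, b) :: t) = if b then x :: marked t else marked t.
Proof. by case: b. Qed.

Lemma unmarked_cat t1 t2 : unmarked (t1 ++ t2) = unmarked t1 ++ unmarked t2.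
Proof. by rewrite /unmarked filter_cat map_cat. Qed.

Lemma marked_cat t1 t2 : marked (t1 ++ t2) = marked t1 ++ marked t2.
Proof. by rewrite /marked filter_cat map_cat. Qed.

Lemma size_marking t : size (unmarked t) + size (marked t) = size t.
Proof.
by elim: t => // -[x []] t IH; rewrite unmarked_cons marked_cons /= -IH ?addnS.
Qed.

Lemma count_marking (P : pred T) t :
  count P (map fst t) = count P (unmarked t) + count P (marked t).
Proof.
by elim: t => // -[y []] t IH; rewrite unmarked_cons marked_cons /= IH; lia.
Qed.

Lemma unmarked_take t n :
  unmarked (take n t) = take (size (unmarked (take n t))) (unmarked t).
Proof.
by rewrite -[X in take _ (unmarked X)](cat_take_drop n t) unmarked_cat take_size_cat.
Qed.

Lemma marked_take t n :
  marked (take n t) = take (size (marked (take n t))) (marked t).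
Proof.
by rewrite -[X in take _ (marked X)](cat_take_drop n t) marked_cat take_size_cat.
Qed.

Lemma count_take_marking (P : pred T) t n :
  count P (take n (map fst t)) =
  count P (take (size (unmarked (take n t))) (unmarked t)) + count P (marked (take n t)).
Proof. by rewrite -map_take count_marking -unmarked_take. Qed.

Lemma size_unmarked_take_drop t n :
  size (unmarked (take n t)) + size (unmarked (drop n t)) = size (unmarked t).
Proof. by rewrite -size_cat -unmarked_cat cat_take_drop. Qed.

Lemma size_unmarked_take_mono t m n : m <= n ->
  size (unmarked (take m t)) <= size (unmarked (take n t)).
Proof.
move=> le_mn; rewrite -(take_takel t le_mn) (unmarked_take (take n t) m) size_take.
by case: ifP => // /ltnW.
Qed.

Lemma exists_size_unmarked_take t L : L <= size (unmarked t) ->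
  exists2 n, n <= size t & size (unmarked (take n t)) = L.
Proof.
elim: t L => [|[x []] t IH] L; rewrite ?unmarked_cons.
- by rewrite leqn0 => /eqP ->; exists 0.
- by move=> /IH [n le_nt <-]; exists n.+1.
- case: L => [|L] le_L; first by exists 0.
  by have [n le_nt <-] := IH L le_L; exists n.+1.
Qed.

Lemma marked_nil t : marked t = [::] -> map fst t = unmarked t.
Proof.
by elim: t => // -[x []] t IH; rewrite unmarked_cons marked_cons //= => /IH ->.
Qed.

Lemma interleave_marking (v w z : seq T) t : interleave v w z -> map fst t = v ->
  exists t', [/\ map fst t' = z, unmarked t' = unmarked t &
                 interleave (marked t) w (marked t')].
Proof.
move=> I; elim: I t => [|x v' w' z' _ IH|x v' w' z' _ IH] t.
- by case: t => // _; exists [::]; split=> //; constructor.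
- case: t => // -[y b] t /= [<- /IH [t' [<- Eu Im]]].
  exists ((y, b) :: t'); rewrite !unmarked_cons !marked_cons Eu.
  by case: b; split=> //; exact: interleave_l.
- move=> /IH [t' [<- Eu Im]]; exists ((x, true) :: t').
  by rewrite unmarked_cons marked_cons; split=> //; exact: interleave_r.
Qed.

End Marking.

Section MarkingEq.
Variable T : eqType.
Implicit Types t : seq (T * bool).

Lemma mem_marked x t : (x \in marked t) = ((x, true) \in t).
Proof.
elim: t => // -[y b] t IH; rewrite marked_cons in_cons -IH xpair_eqE.
by case: b; rewrite ?in_cons ?andbT ?andbF.
Qed.

Lemma notin_marked_take_find x t :
  x \notin marked (take (find (pred1 (x, true)) t) t).
Proof.
elim: t => // -[y b] t IH /=; case: ifP => // /negbT neq_yb.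
rewrite marked_cons; case: b neq_yb => //= neq_yx.
by rewrite inE negb_or IH andbT; apply: contra neq_yx => /eqP ->.
Qed.

Lemma marked_take_nil_nth x0 x t n p : marked (take n t) = [::] ->
  p < size t -> nth x0 t p = (x, true) -> n <= p.
Proof.
move=> nil_n lt_p nth_p; rewrite leqNgt; apply/negP => lt_pn.
suff : x \in marked (take n t) by rewrite nil_n.
by rewrite mem_marked -nth_p -(nth_take x0 lt_pn) mem_nth // size_take_min leq_min lt_pn.
Qed.

Lemma marked_drop_nil_nth x0 x t n p : marked (drop n t) = [::] ->
  p < size t -> nth x0 t p = (x, true) -> p < n.
Proof.
move=> nil_n lt_p nth_p; rewrite ltnNge; apply/negP => le_np.
suff : x \in marked (drop n t) by rewrite nil_n.
rewrite mem_marked -nth_p -(subnKC le_np) -nth_drop mem_nth // size_drop.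
by rewrite ltn_sub2r // (leq_ltn_trans le_np).
Qed.

End MarkingEq.

Lemma take_nseq_cat (T : Type) (x y : T) p q r :
  take r (nseq p x ++ nseq q y) = nseq (minn r p) x ++ nseq (minn (r - p) q) y.
Proof.
rewrite take_cat size_nseq; case: ltnP => [lt_rp|le_pr].
- have -> : r - p = 0 by lia.
  by rewrite take_nseq ?(ltnW lt_rp) // min0n cats0; congr nseq; lia.
- have [le|lt] := leqP (r - p) q.
  + by rewrite take_nseq //; congr (nseq _ _ ++ nseq _ _); lia.
  + by rewrite take_oversize ?size_nseq; [congr (nseq _ _ ++ nseq _ _)|]; lia.
Qed.

Section Heights.
Variables h k : nat.

Definition ht (s : word) : Z := k * count_mem la s - h * count_mem lb s.

Lemma ht_cat u v : ht (u ++ v) = (ht u + ht v)%Z.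
Proof. rewrite /ht !count_cat; lia. Qed.

Lemma ht_count_add s u v :
  count_mem la s = count_mem la u + count_mem la v ->
  count_mem lb s = count_mem lb u + count_mem lb v ->
  ht s = (ht u + ht v)%Z.
Proof. by rewrite /ht => -> ->; lia. Qed.

Lemma interleave_ht u v t : interleave u v t -> ht t = (ht u + ht v)%Z.
Proof. by move=> I; apply: ht_count_add; exact: interleave_count_mem. Qed.

Lemma count_la_take_ab p q r : count_mem la (take r (pw la p ++ pw lb q)) = minn r p.
Proof. by rewrite take_nseq_cat count_cat !count_nseq /= mul1n mul0n addn0. Qed.

Lemma count_lb_take_ab p q r :
  count_mem lb (take r (pw la p ++ pw lb q)) = minn (r - p) q.
Proof. by rewrite take_nseq_cat count_cat !count_nseq /= mul1n mul0n. Qed.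

Lemma ht_take_ab p q r :
  ht (take r (pw la p ++ pw lb q)) = (k * minn r p - h * minn (r - p) q)%Z.
Proof. by rewrite /ht count_la_take_ab count_lb_take_ab. Qed.

Lemma ht_pw_la p : ht (pw la p) = (k * p)%Z.
Proof. rewrite /ht !count_nseq /=; lia. Qed.

Lemma ht_pw_lb q : ht (pw lb q) = (- (h * q))%Z.
Proof. rewrite /ht !count_nseq /=; lia. Qed.

Lemma ht_take_wrd_ge0 r : (0 <= ht (take r (wrd h k)))%Z.
Proof.
by rewrite ht_take_ab; case: leqP => _; nia.
Qed.

Definition admissible (c : word) :=
  [/\ forall n, (0 <= ht (take n c))%Z,
      forall n, 0 < count_mem lb (take n c) -> h <= count_mem la (take n c) &
      ht c = 0%Z].

Lemma admissible_nil : admissible [::].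
Proof. split=> [n|n|]; rewrite /ht /=; lia. Qed.

Lemma admissible_interleave c c' :
  admissible c -> interleave c (wrd h k) c' -> admissible c'.
Proof.
move=> [ht_ge0 la_ge ht0] I; split.
- move=> n; have [n1 [n2 /interleave_ht ->]] := interleave_take n I.
  by have := ht_take_wrd_ge0 (r := n2); move: (ht_ge0 n1); lia.
- move=> n; have [n1 [n2 /interleave_count_mem cnt]] := interleave_take n I.
  rewrite !cnt count_la_take_ab count_lb_take_ab.
  move: (la_ge n1); lia.
- by rewrite (interleave_ht I) ht0 /wrd ht_cat /ht !count_nseq /=; lia.
Qed.

Lemma ht_take_marking (t : seq (letter * bool)) n :
  ht (take n (map fst t)) =
  (ht (take (size (unmarked (take n t))) (unmarked t)) + ht (marked (take n t)))%Z.
Proof. by apply: ht_count_add; exact: count_take_marking. Qed.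

Lemma admissible_ht_marked_take (t : seq (letter * bool)) n :
  admissible (marked t) -> (0 <= ht (marked (take n t)))%Z.
Proof. by case=> ht_ge0 _ _; rewrite marked_take. Qed.

Lemma size_count_ab (s : word) : size s = count_mem la s + count_mem lb s.
Proof.
rewrite -(count_predC (pred1 la) s); congr (_ + _).
by apply: eq_count => -[].
Qed.

Lemma admissible_first_marked_b (t : seq (letter * bool)) :
  0 < k -> admissible (marked t) -> marked t != [::] ->
  exists p, [/\ nth (la, false) t p = (lb, true),
                count_mem lb (marked (take p t)) = 0 &
                h <= count_mem la (marked (take p t))].
Proof.
move=> k_gt0 [_ la_ge ht0] ne.
have b_marked : lb \in marked t.
  apply: contraT => /count_memPn no_b; move: ne ht0.
  rewrite /ht -size_eq0 size_count_ab !no_b; nia.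
have has_b : has (pred1 (lb, true)) t by rewrite has_pred1 -mem_marked.
exists (find (pred1 (lb, true)) t); set p := find _ t.
have nth_p : nth (la, false) t p = (lb, true).
  by apply/eqP; exact: (nth_find (la, false) has_b).
have no_b : count_mem lb (marked (take p t)) = 0.
  exact/count_memPn/notin_marked_take_find.
split=> //.
have take_p1 : marked (take p.+1 t) = marked (take p t) ++ [:: lb].
  by rewrite (take_nth (la, false)) ?nth_p -?has_find // -cats1 marked_cat.
have := la_ge (size (marked (take p.+1 t))); rewrite -marked_take take_p1 !count_cat /=.
rewrite no_b; lia.
Qed.

Lemma derives_marking x z : derives [:: wrd h k] x z ->
  exists t : seq (letter * bool),
    [/\ map fst t = z, unmarked t = x & admissible (marked t)].
Proof.
move=> /(clos_rt_rtn1 _ _ _ _); elim=> [|y {}z [u]].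
- exists [seq (c, false) | c <- x]; split; first by rewrite -map_comp map_id.
  + by elim: x => // c x IH; rewrite /= unmarked_cons IH.
  + have -> : marked [seq (c, false) | c <- x] = [::] by elim: x.
    exact: admissible_nil.
- rewrite inE => /eqP -> /shuffle_interleave I _ [t [Et <- adm]].
  have [t' [Et' Eu /(admissible_interleave adm) adm']] := interleave_marking I Et.
  by exists t'.
Qed.

End Heights.

Lemma count_take_le (T : Type) (P : pred T) n (s : seq T) :
  count P (take n s) <= count P s.
Proof. by rewrite -[X in _ <= count _ X](cat_take_drop n s) count_cat leq_addr. Qed.

Lemma take_catr (T : Type) (s1 s2 : seq T) r : size s1 <= r ->
  take r (s1 ++ s2) = s1 ++ take (r - size s1) s2.
Proof. by move=> le; rewrite take_cat ltnNge le. Qed.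

Section Profile.
Variables h k : nat.
Hypotheses (h_ge2 : 2 <= h) (k_ge2 : 2 <= k).
Local Notation ht := (ht h k).
Local Notation S := (Sn h k).

Definition block : word := [:: la; lb] ++ pw la h.-1 ++ pw lb k.-1.
Definition blocks n : word := flatten (nseq n block).
Definition last_peak n := 5 * h + 2 * k + n * (h + k).

Lemma blocksS n : blocks n.+1 = block ++ blocks n.
Proof. by []. Qed.

Lemma size_block : size block = h + k.
Proof. rewrite /block /= size_cat !size_nseq; lia. Qed.

Lemma ht_block : ht block = 0%Z.
Proof. rewrite /block /= /ht /= !count_cat !count_nseq /=; lia. Qed.

Lemma ht_take_block r : (- h < ht (take r block) <= h * k - h)%Z.
Proof.
case: r => [|[|r]]; try by rewrite /ht /=; nia.
rewrite /block take_catr // ht_cat ht_take_ab /= !subSS subn0 /ht /=.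
case: (leqP r h.-1) => [le_r|lt_r].
- have -> : minn (r - h.-1) k.-1 = 0 by lia.
  have : (k * r <= k * h.-1)%nat by rewrite leq_mul2l le_r orbT.
  nia.
- have : (minn (r - h.-1) k.-1 <= k.-1)%nat := geq_minr _ _.
  nia.
Qed.

Lemma size_blocks n : size (blocks n) = n * (h + k).
Proof. by rewrite /blocks size_flatten /shape map_nseq sumn_nseq size_block mulnC. Qed.

Lemma ht_blocks n : ht (blocks n) = 0%Z.
Proof.
elim: n => [|n IH]; first by rewrite /ht /=; lia.
by rewrite blocksS ht_cat ht_block IH.
Qed.

Lemma ht_take_blocks n r : (- h < ht (take r (blocks n)) <= h * k - h)%Z.
Proof.
elim: n r => [|n IH] r; first by rewrite /ht /=; nia.
rewrite blocksS take_cat size_block; case: ifP => _.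
- exact: ht_take_block.
- by rewrite ht_cat ht_block; exact: IH.
Qed.

Lemma Sn_eq n : S n = (pw la (3 * h) ++ pw lb (2 * k)) ++ blocks n ++
                      (pw la (2 * h) ++ pw lb (3 * k)).
Proof.
rewrite /Sn /pw /blocks /block.
have -> : 3 * h = h + 2 * h by lia.
have -> : 3 * k = 2 * k + k by lia.
by rewrite !nseqD !catA.
Qed.

Lemma size_Sn n : size (S n) = last_peak n + 3 * k.
Proof. rewrite Sn_eq !size_cat !size_nseq size_blocks /last_peak; lia. Qed.

Lemma ht_take_Sn_head n r : r <= 3 * h + 2 * k ->
  ht (take r (S n)) = (k * minn r (3 * h) - h * minn (r - 3 * h) (2 * k))%Z.
Proof.
move=> le_r; rewrite Sn_eq takel_cat ?ht_take_ab // size_cat !size_nseq; lia.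
Qed.

Lemma ht_take_Sn_mid n r :
  3 * h + 2 * k <= r -> r <= 3 * h + 2 * k + n * (h + k) ->
  (h * k - h < ht (take r (S n)) <= 2 * (h * k) - h)%Z.
Proof.
move=> le_r le_r'; rewrite Sn_eq take_catr ?size_cat ?size_nseq //.
rewrite takel_cat ?size_blocks; last lia.
rewrite !ht_cat ht_pw_la ht_pw_lb.
have := ht_take_blocks n (r - (3 * h + 2 * k)); lia.
Qed.

Lemma ht_take_Sn_tail n r :
  ht (take (3 * h + 2 * k + n * (h + k) + r) (S n)) =
  (h * k + k * minn r (2 * h) - h * minn (r - 2 * h) (3 * k))%Z.
Proof.
rewrite Sn_eq catA take_catr ?size_cat ?size_nseq ?size_blocks ?leq_addr //.
rewrite !ht_cat ht_blocks ht_take_ab !ht_pw_la !ht_pw_lb addKn; lia.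
Qed.

Lemma Sn_prefix_cases n r :
  [\/ r <= 3 * h + 2 * k,
       3 * h + 2 * k < r <= 3 * h + 2 * k + n * (h + k) |
       exists2 r', 0 < r' & r = 3 * h + 2 * k + n * (h + k) + r'].
Proof.
case: (leqP r (3 * h + 2 * k)) => [|lt1]; first by constructor 1.
case: (leqP r (3 * h + 2 * k + n * (h + k))) => [le2|lt2].
  by constructor 2; apply/andP.
by constructor 3; exists (r - (3 * h + 2 * k + n * (h + k))); lia.
Qed.

Lemma ht_take_Sn_peak n r : r <= size (S n) ->
  (3 * (h * k) <= ht (take r (S n)))%Z <-> r = 3 * h \/ r = last_peak n.
Proof.
rewrite size_Sn /last_peak => le_r.
case: (Sn_prefix_cases n r) => [le_head|/andP[lt_mid le_mid]|[r' r'_gt0 ->]].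
- rewrite ht_take_Sn_head //; case: (ltngtP r (3 * h)) => [lt|gt|->]; nia.
- have := ht_take_Sn_mid (ltnW lt_mid) le_mid; nia.
- rewrite ht_take_Sn_tail; case: (ltngtP r' (2 * h)) => [lt|gt|->]; nia.
Qed.

Lemma ht_take_Sn_gt n r : 3 * h <= r -> r <= last_peak n ->
  (h * k - h < ht (take r (S n)))%Z.
Proof.
rewrite /last_peak => ge_r le_r.
case: (Sn_prefix_cases n r) => [le_head|/andP[lt_mid le_mid]|[r' r'_gt0 Er]].
- rewrite ht_take_Sn_head // (minn_idPr ge_r); nia.
- by have := ht_take_Sn_mid (ltnW lt_mid) le_mid; lia.
- have r'_small : r' - 2 * h = 0 by lia.
  rewrite Er ht_take_Sn_tail r'_small min0n; nia.
Qed.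

Lemma count_la_take_Sn n r : r <= 3 * h + 2 * k ->
  count_mem la (take r (S n)) = minn r (3 * h).
Proof.
by move=> le_r; rewrite Sn_eq takel_cat ?count_la_take_ab // size_cat !size_nseq.
Qed.

Lemma count_la_take_Sn_ge n r : 3 * h <= r -> 3 * h <= count_mem la (take r (S n)).
Proof.
move=> ge_r; apply: leq_trans (count_take_le _ (3 * h) _).
by rewrite take_takel // count_la_take_Sn ?leq_addr // minnn.
Qed.

Lemma ht_take_Sn_at_b n r : 3 * h + 2 * k <= r -> r < last_peak n ->
  nth la (S n) r = lb -> (ht (take r (S n)) <= 2 * (h * k) - h)%Z.
Proof.
rewrite /last_peak => ge_r lt_r.
have [le_mid|lt_mid] := leqP r (3 * h + 2 * k + n * (h + k)).
  by have := ht_take_Sn_mid ge_r le_mid; lia.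
rewrite Sn_eq catA /pw nth_cat !size_cat !size_nseq size_blocks ltnNge (ltnW lt_mid) /=.
rewrite nth_cat size_nseq ifT ?nth_nseq ?if_same //; lia.
Qed.

End Profile.

Section Trace.
Variables h k : nat.
Hypotheses (h_ge2 : 2 <= h) (k_ge2 : 2 <= k).
Variables (i j : nat) (t : seq (letter * bool)).
Hypotheses (t_letters : map fst t = Sn h k j) (t_unmarked : unmarked t = Sn h k i)
           (t_admissible : admissible h k (marked t)).
Local Notation ht := (ht h k).
Local Notation S := (Sn h k).
Local Notation last_peak := (last_peak h k).

Lemma size_trace : size t = last_peak j + 3 * k.
Proof. by rewrite -(size_map fst) t_letters size_Sn. Qed.

Lemma ht_take_trace n :
  ht (take n (S j)) =
  (ht (take (size (unmarked (take n t))) (S i)) + ht (marked (take n t)))%Z.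
Proof. by rewrite -t_letters -t_unmarked ht_take_marking. Qed.

Lemma count_la_take_trace n :
  count_mem la (take n (S j)) =
  count_mem la (take (size (unmarked (take n t))) (S i)) + count_mem la (marked (take n t)).
Proof. by rewrite -t_letters -t_unmarked; exact: count_take_marking. Qed.

Lemma trace_peak L : L <= size (S i) -> (3 * (h * k) <= ht (take L (S i)))%Z ->
  exists2 n, size (unmarked (take n t)) = L & n = 3 * h \/ n = last_peak j.
Proof.
rewrite -t_unmarked => /exists_size_unmarked_take [n le_n <-] peak_x; exists n => //.
apply/(ht_take_Sn_peak h_ge2 k_ge2); first by rewrite -t_letters size_map.
rewrite ht_take_trace -t_unmarked.
have := admissible_ht_marked_take (n := n) t_admissible; lia.
Qed.

Lemma size_unmarked_take_3h : size (unmarked (take (3 * h) t)) = 3 * h.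
Proof.
have [||n size_n [n_3h|n_last]] := @trace_peak (3 * h).
- by rewrite size_Sn /last_peak; lia.
- by rewrite ht_take_Sn_head //; lia.
- by subst n.
exfalso; have := size_unmarked_take_drop t n; have := size_marking (drop n t).
rewrite size_drop size_trace t_unmarked size_Sn // size_n n_last /last_peak; lia.
Qed.

Lemma size_unmarked_take_last_peak : size (unmarked (take (last_peak j) t)) = last_peak i.
Proof.
have [||n size_n [n_3h|n_last]] := @trace_peak (last_peak i).
- by rewrite size_Sn // leq_addr.
- have -> : last_peak i = 3 * h + 2 * k + i * (h + k) + 2 * h by rewrite /last_peak; lia.
  rewrite ht_take_Sn_tail // subnn min0n; nia.
- by move: size_n; rewrite n_3h size_unmarked_take_3h /last_peak; lia.
- by subst n.
Qed.

Lemma marked_take_3h : marked (take (3 * h) t) = [::].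
Proof.
apply/size0nil; have := size_marking (take (3 * h) t).
rewrite size_unmarked_take_3h size_takel; first lia.
by rewrite size_trace /last_peak; lia.
Qed.

Lemma marked_drop_last_peak : marked (drop (last_peak j) t) = [::].
Proof.
apply/size0nil; have := size_marking (drop (last_peak j) t).
have := size_unmarked_take_drop t (last_peak j).
rewrite size_unmarked_take_last_peak t_unmarked size_Sn // size_drop size_trace; lia.
Qed.

Lemma marked_trace : marked t = [::].
Proof.
apply/eqP; apply: contraT => ne.
have [p [nth_p no_b many_a]] := admissible_first_marked_b (ltnW k_ge2) t_admissible ne.
have lt_p : p < size t by case: ltnP nth_p => // /(nth_default (la, false)) ->.
have ge_p := marked_take_nil_nth marked_take_3h lt_p nth_p.
have lt_pj := marked_drop_nil_nth marked_drop_last_peak lt_p nth_p.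
set L := size (unmarked (take p t)).
have ge_L : 3 * h <= L.
  by rewrite -size_unmarked_take_3h; exact: size_unmarked_take_mono.
have le_L : L <= last_peak i.
  by rewrite -size_unmarked_take_last_peak; apply: size_unmarked_take_mono; exact: ltnW.
case: (leqP (3 * h + 2 * k) p) => [ge_p2|lt_p2].
- have nth_y : nth la (S j) p = lb by rewrite -t_letters (nth_map (la, false)) // nth_p.
  have := ht_take_Sn_at_b h_ge2 k_ge2 ge_p2 lt_pj nth_y.
  have := ht_take_Sn_gt h_ge2 k_ge2 ge_L le_L.
  rewrite ht_take_trace -/L /ht no_b; nia.
- have := count_la_take_trace p.
  rewrite count_la_take_Sn ?(ltnW lt_p2) // (minn_idPr ge_p) -/L.
  have := count_la_take_Sn_ge h_ge2 k_ge2 i ge_L; lia.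
Qed.

Lemma trace_Sn_eq : i = j.
Proof.
have := marked_nil marked_trace; rewrite t_letters t_unmarked => /(congr1 size).
rewrite !size_Sn // /last_peak => size_eq.
have /eqP : j * (h + k) = i * (h + k) by lia.
by rewrite eqn_mul2r => /orP[|/eqP ->]; first lia.
Qed.

End Trace.

Theorem lemma3 (h k : nat) :
  2 <= h -> 2 <= k ->
  forall i j : nat, 1 <= i -> 1 <= j ->
    (derives [:: wrd h k] (Sn h k i) (Sn h k j) <-> i = j).
Proof.
move=> h_ge2 k_ge2 i j _ _; split=> [D|->]; last exact: rt_refl.
have [t [t_letters t_unmarked t_admissible]] := derives_marking D.
exact: trace_Sn_eq t_letters t_unmarked t_admissible.
Qed.
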